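(* Let $G=(V,E)$ be a finite graph satisfying the $CD\psi(n,-K)$ condition for some $n>0$, $K>0$, where $\psi:(0,+\infty)\to\mathbb R$ is a $C^1$ concave function with $\psi'(1)=0$. Let $\sigma\in\mathbb R$ and $c:[0,\infty)\to\mathbb R$ continuous with either ($c\ge0$, $\sigma\le1$) or ($c\le0$, $\sigma\ge1$), and let $u$ be a positive solution of $\partial_tu=\Delta u+c(t)u^\sigma$ on $V$. Fix $0<\alpha<1$. Then for all vertices and all $t>0$, $$(1-\alpha)\Gamma^\psi(u)\le\frac{n}{2(1-\alpha)t}+\frac{Kn}{2\alpha}.$$
   Context: Graphs: $G=(V,E)$ is a connected, locally finite graph; each edge $xy$ carries a weight $w_{xy}>0$ (possibly asymmetric), and $\mu:V\to(0,\infty)$ is a vertex measure; $y\sim x$ means $xy\in E$. Laplacian: $\Delta f(x)=\frac{1}{\mu(x)}\sum_{y\sim x}w_{xy}(f(y)-f(x))$. For $f:V\to(0,\infty)$: $\Delta^\psi f(x)=\Delta\big[\psi\big(\tfrac{f}{f(x)}\big)\big](x)$; $\overline\psi(s)=\psi'(1)(s-1)-(\psi(s)-\psi(1))$, $\Gamma^\psi f=\Delta^{\overline\psi}f$; $(\Omega^\psi f)(x)=\Delta\big[\psi'\big(\tfrac{f}{f(x)}\big)\tfrac{f}{f(x)}\big(\tfrac{\Delta f}{f}-\tfrac{\Delta f(x)}{f(x)}\big)\big](x)$; $2\Gamma_2^\psi(f)=\Omega^\psi f+\frac{\Delta f\,\Delta^\psi f}{f}-\frac{\Delta(f\Delta^\psi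 f)}{f}$. $CD\psi(n,K)$: for every $f:V\to(0,\infty)$ and every vertex, $\Gamma_2^\psi(f)\ge\frac1n(\Delta^\psi f)^2+K\Gamma^\psi(f)$. A positive solution $u:V\times[0,\infty)\to(0,\infty)$ is continuously differentiable in $t$; operators are applied to $u(\cdot,t)$ at each fixed time. *)

From HB Require Import structures.
From mathcomp Require Import all_boot all_order all_algebra.
From mathcomp Require Import all_classical all_reals all_analysis.
Set Implicit Arguments. Unset Strict Implicit. Unset Printing Implicit Defensive.
Import Order.TTheory GRing.Theory Num.Theory numFieldNormedType.Exports.
Local Open Scope ring_scope.

Section GraphOps.
Variables (R : realType) (V : finType).
(* Graph data: symmetric adjacency [adj], edge weights [w] (possibly asymmetric,
   positive on edges), vertex measure [mu]. *)
Variables (adj : rel V) (w : V -> V -> R) (mu : V -> R).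

Definition Lap (f : V -> R) (x : V) : R :=
  (mu x)^-1 * \sum_(y | adj x y) w x y * (f y - f x).

Definition LapPsi (psi : R -> R) (f : V -> R) (x : V) : R :=
  Lap (fun z => psi (f z / f x)) x.

Definition psibar (psi : R -> R) (s : R) : R :=
  derive1 psi 1 * (s - 1) - (psi s - psi 1).

Definition GammaPsi (psi : R -> R) (f : V -> R) (x : V) : R :=
  LapPsi (psibar psi) f x.

Definition OmegaPsi (psi : R -> R) (f : V -> R) (x : V) : R :=
  Lap (fun z => derive1 psi (f z / f x) * (f z / f x)
                  * (Lap f z / f z - Lap f x / f x)) x.

Definition Gamma2Psi (psi : R -> R) (f : V -> R) (x : V) : R :=
  (OmegaPsi psi f x + Lap f x * LapPsi psi f x / f x
    - Lap (fun z => f z * LapPsi psi f z) x / f x) / 2.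

Definition CDpsi (psi : R -> R) (n K : R) : Prop :=
  forall (f : V -> R), (forall z, 0 < f z) ->
    forall x, Gamma2Psi psi f x >= n^-1 * (LapPsi psi f x) ^+ 2 + K * GammaPsi psi f x.

End GraphOps.

Definition weighted_graph (R : realType) (V : finType) (adj : rel V)
    (w : V -> V -> R) (mu : V -> R) : Prop :=
  [/\ symmetric adj, irreflexive adj,
      (forall x y, connect adj x y),
      (forall x y, adj x y -> 0 < w x y) &
      (forall x, 0 < mu x)].

Definition C1_concave_pos (R : realType) (psi : R -> R) : Prop :=
  [/\ (forall s : R, 0 < s -> derivable psi s 1),
      {in `]0, +oo[, continuous (derive1 psi)} &
      (forall a b t : R, 0 < a -> 0 < b -> 0 <= t <= 1 ->
         t * psi a + (1 - t) * psi b <= psi (t * a + (1 - t) * b))].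

From HB Require Import structures.
From mathcomp Require Import all_boot all_order all_algebra.
From mathcomp Require Import all_classical all_reals all_analysis.
From mathcomp Require Import ring lra.
Set Implicit Arguments. Unset Strict Implicit. Unset Printing Implicit Defensive.
Import Order.TTheory GRing.Theory Num.Theory numFieldNormedType.Exports.
Local Open Scope ring_scope.

(* Since psi'(1) = 0, Gamma^psi u = - Delta^psi u is the defect
   H(x,t) = mu(x)^-1 sum_y w_xy (psi(1) - psi(u(y,t)/u(x,t))).  With eps = alpha^2 T,
   let (x0,t0) maximise (t - eps) H on V x [eps,T].  In time, the left derivative of
   (t - eps) H at t0 is nonnegative.  In space, H(y,t0) <= H(x0,t0) for the neighbours y,
   so the transport part of 2 Gamma_2^psi u is nonpositive.  Differentiating H along the
   equation gives dH/dt = - Omega^psi u - (reaction term), and the reaction term is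
   nonnegative because psi' >= 0 on (0,1] and psi' <= 0 on [1,oo) (concavity) while
   s |-> c s^(sigma - 1) is nonincreasing (sign conditions).  CDpsi(n,-K) then gives
   dH/dt <= -(2/n) H^2 + 2 K H at (x0,t0), hence (t0 - eps) H <= n/2 + n K T there, and
   evaluating at (x,T) and dividing by (1 - alpha^2) T yields the estimate. *)

Section OneSidedDerivative.
Variables (R : realType) (f : R -> R) (a : R).
Hypothesis df : derivable f a 1.

Let quotE :
  (fun h => h^-1 *: ((f \o shift a) h%:A - f a)) = (fun h => h^-1 * (f (h + a) - f a)).
Proof. by apply/funext => h /=; rewrite [_%:A]mulr1. Qed.

Lemma derive1_cvg_at_right :
  (h^-1 * (f (h + a) - f a) @[h --> 0^'+] --> derive1 f a)%classic.
Proof.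
rewrite derive1E -quotE => A /df /nbhs_ballP [_ /posnumP[e] eA].
by exists e%:num => //= h he /gt_eqF/negbT/eA; exact.
Qed.

Lemma derive1_cvg_at_left :
  (h^-1 * (f (h + a) - f a) @[h --> 0^'-] --> derive1 f a)%classic.
Proof.
rewrite derive1E -quotE => A /df /nbhs_ballP [_ /posnumP[e] eA].
by exists e%:num => //= h he /lt_eqF/negbT/eA; exact.
Qed.

Lemma derive1_ge_at_right m d : 0 < d ->
  (forall h, 0 < h < d -> m <= h^-1 * (f (h + a) - f a)) -> m <= derive1 f a.
Proof.
move=> d0 hm; apply: (cvgr_to_ge derive1_cvg_at_right).
near=> h; apply: hm; apply/andP; split; near: h.
  exact: nbhs_right_gt.
exact: nbhs_right_lt.
Unshelve. all: by end_near. Qed.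

Lemma derive1_ge_at_left m d : 0 < d ->
  (forall h, - d < h < 0 -> m <= h^-1 * (f (h + a) - f a)) -> m <= derive1 f a.
Proof.
move=> d0 hm; apply: (cvgr_to_ge derive1_cvg_at_left).
near=> h; apply: hm; apply/andP; split; near: h.
  by apply: nbhs_left_gt; rewrite ltrNl oppr0.
exact: nbhs_left_lt.
Unshelve. all: by end_near. Qed.
End OneSidedDerivative.

Lemma derive1_le_at_left (R : realType) (f : R -> R) a m d :
  derivable f a 1 -> 0 < d ->
  (forall h, - d < h < 0 -> h^-1 * (f (h + a) - f a) <= m) -> derive1 f a <= m.
Proof.
move=> df d0 hm; rewrite -lerN2 -derive1N //.
apply: (derive1_ge_at_left (derivableN df) d0) => h /hm.
by rewrite /= -opprD mulrN lerN2.
Qed.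

Lemma is_derive_sumr (R : realType) (I : Type) (r : seq I) (P : pred I)
    (F : I -> R -> R) (dF : I -> R) (t : R) :
  (forall i, P i -> is_derive t 1 (F i) (dF i)) ->
  is_derive t 1 (fun s => \sum_(i <- r | P i) F i s) (\sum_(i <- r | P i) dF i).
Proof.
move=> dFi; rewrite -fct_sumE.
apply: (big_ind2 (fun G d => is_derive t 1 G d)) => //; first exact: is_derive_cst.
by move=> G dG H dH; exact: is_deriveD.
Qed.

Lemma reaction_rate_nonincr (R : realType) (k sigma a b : R) :
  (0 <= k /\ sigma <= 1) \/ (k <= 0 /\ 1 <= sigma) -> 0 < a -> a <= b ->
  k * (b `^ sigma / b) <= k * (a `^ sigma / a).
Proof.
move=> hk a0 ab; have b0 : 0 < b by apply: lt_le_trans ab.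
have powRB1 x : 0 < x -> x `^ sigma / x = x `^ (sigma - 1).
  by move=> x0; rewrite powRB ?(gt_eqF x0) ?implybT // powRr1 // ltW.
have lepow e : 0 <= e -> a `^ e <= b `^ e.
  by move=> e0; apply: ge0_ler_powR; rewrite // nnegrE ltW.
rewrite !powRB1 //; case: hk => [[k0 s1]|[k0 s1]].
- rewrite ler_wpM2l // -[sigma - 1]opprB !powRN lef_pV2 ?posrE ?powR_gt0 //.
  by apply: lepow; lra.
- by rewrite ler_wnM2l //; apply: lepow; lra.
Qed.

Section ConcaveDerivative.
Variables (R : realType) (psi : R -> R).
Hypothesis psi_C1_concave : C1_concave_pos psi.

Lemma concave_chord a b c : 0 < a -> a < b -> b < c ->
  (c - b) * psi a + (b - a) * psi c <= (c - a) * psi b.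
Proof.
case: psi_C1_concave => _ _ cvx a0 ab bc.
have ca : 0 < c - a by lra.
pose t := (c - b) / (c - a).
have t01 : 0 <= t <= 1 by rewrite divr_ge0 ?ler_pdivrMr //=; lra.
have -> : (c - b) * psi a + (b - a) * psi c = (c - a) * (t * psi a + (1 - t) * psi c).
  by rewrite /t; field; lra.
have <- : t * a + (1 - t) * c = b by rewrite /t; field; lra.
by rewrite ler_pM2l //; apply: cvx; lra.
Qed.

Lemma concave_derive1_nonincr a b : 0 < a -> a < b -> derive1 psi b <= derive1 psi a.
Proof.
case: (psi_C1_concave) => dpsi _ _ a0 ab.
have ba : 0 < b - a by lra.
apply: (@le_trans _ _ ((psi b - psi a) / (b - a))).
- apply: (@derive1_le_at_left _ _ _ _ (b - a)) => //; first by apply: dpsi; lra.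
  move=> h /andP[hlo hhi]; have := concave_chord a0 (_ : a < h + b) (_ : h + b < b).
  by rewrite ler_ndivrMl // mulrA ler_pdivrMr //; lra.
- apply: (@derive1_ge_at_right _ _ _ (dpsi _ a0) _ (b - a)) => // h /andP[hlo hhi].
  have := concave_chord a0 (_ : a < h + a) (_ : h + a < b).
  by rewrite ler_pdivlMl // mulrA ler_pdivrMr //; lra.
Qed.

Hypothesis psi'1 : derive1 psi 1 = 0.

Lemma derive1_ge0_le1 s : 0 < s -> s <= 1 -> 0 <= derive1 psi s.
Proof.
move=> s0; rewrite le_eqVlt => /predU1P[->|s1]; first by rewrite psi'1.
by rewrite -psi'1 concave_derive1_nonincr.
Qed.

Lemma derive1_le0_ge1 s : 1 <= s -> derive1 psi s <= 0.
Proof.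
rewrite le_eqVlt => /predU1P[<-|s1]; first by rewrite psi'1.
by rewrite -psi'1 concave_derive1_nonincr.
Qed.

Lemma reaction_term_ge0 (k sigma a b : R) :
  (0 <= k /\ sigma <= 1) \/ (k <= 0 /\ 1 <= sigma) -> 0 < a -> 0 < b ->
  0 <= derive1 psi (a / b) * (a / b) * (k * (a `^ sigma / a) - k * (b `^ sigma / b)).
Proof.
move=> hk a0 b0; have q0 : 0 < a / b by apply: divr_gt0.
have [ab|ba] := lerP a b.
- apply: mulr_ge0; last by rewrite subr_ge0 reaction_rate_nonincr.
  by rewrite mulr_ge0 ?(ltW q0) // derive1_ge0_le1 // ler_pdivrMr // mul1r.
- apply: mulr_le0; last by rewrite subr_le0 reaction_rate_nonincr // ltW.
  by rewrite mulr_le0_ge0 ?(ltW q0) // derive1_le0_ge1 // ler_pdivlMr // mul1r ltW.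
Qed.
End ConcaveDerivative.

Section PsiDefect.
Variables (R : realType) (V : finType) (adj : rel V) (w : V -> V -> R) (mu : V -> R).
Variable psi : R -> R.
Hypothesis w_gt0 : forall x y, adj x y -> 0 < w x y.
Hypothesis mu_gt0 : forall x, 0 < mu x.
Hypothesis psi_C1_concave : C1_concave_pos psi.
Hypothesis psi'1 : derive1 psi 1 = 0.

Definition psi_defect (f : V -> R) (x : V) : R :=
  (mu x)^-1 * \sum_(y | adj x y) w x y * (psi 1 - psi (f y / f x)).

Definition psi_defect_deriv (f g : V -> R) (x : V) : R :=
  (mu x)^-1 * \sum_(y | adj x y)
    w x y * - (derive1 psi (f y / f x) * (f y / f x) * (g y / f y - g x / f x)).

Lemma LapPsi_defect f x : f x != 0 -> LapPsi adj w mu psi f x = - psi_defect f x.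
Proof.
move=> fx0; rewrite /LapPsi /Lap /psi_defect -mulrN -sumrN; congr (_ * _).
by apply: eq_bigr => y _; rewrite divff //; ring.
Qed.

Lemma GammaPsi_defect f x : f x != 0 -> GammaPsi adj w mu psi f x = psi_defect f x.
Proof.
move=> fx0; rewrite /GammaPsi /LapPsi /Lap /psi_defect /psibar psi'1; congr (_ * _).
by apply: eq_bigr => y _; rewrite divff //; ring.
Qed.

Lemma Gamma2Psi_defect f x : (forall z, f z != 0) ->
  Gamma2Psi adj w mu psi f x = (OmegaPsi adj w mu psi f x +
    (mu x)^-1 * \sum_(y | adj x y) w x y * (f y / f x * (psi_defect f y - psi_defect f x))) / 2.
Proof.
move=> f0; rewrite /Gamma2Psi LapPsi_defect // -addrA /Lap; congr ((_ + _) / 2).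
rewrite -!mulrA -mulrBr; congr (_ * _); rewrite !mulr_suml -sumrB.
by apply: eq_bigr => y _; rewrite !LapPsi_defect //; field.
Qed.

Lemma psi_defect_deriv_flow f g x k sigma :
  (forall z, f z != 0) -> (forall z, g z = Lap adj w mu f z + k * f z `^ sigma) ->
  psi_defect_deriv f g x + OmegaPsi adj w mu psi f x +
    (mu x)^-1 * \sum_(y | adj x y) w x y * (derive1 psi (f y / f x) * (f y / f x) *
      (k * (f y `^ sigma / f y) - k * (f x `^ sigma / f x))) = 0.
Proof.
move=> f0 hg; rewrite /psi_defect_deriv /OmegaPsi {1}/Lap -!mulrDr -!big_split /=.
by rewrite big1 ?mulr0 // => y _; rewrite !hg; ring.
Qed.

Lemma is_derive_psi_defect (u : V -> R -> R) x t :
  (forall y, 0 < u y t) -> (forall y, derivable (u y) t 1) ->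
  is_derive t 1 (fun s => psi_defect (fun y => u y s) x)
    (psi_defect_deriv (fun y => u y t) (fun y => derive1 (u y) t) x).
Proof.
move=> u_gt0 du; have u0 y : u y t != 0 by rewrite gt_eqF.
have {}du y : is_derive t 1 (u y) (derive1 (u y) t) by rewrite derive1E; exact: derivableP.
have dq y : is_derive t 1 (fun s => u y s / u x s)
    (u y t / u x t * (derive1 (u y) t / u y t - derive1 (u x) t / u x t)).
  have -> : (fun s => u y s / u x s) = u y * (fun s => (u x s)^-1) by [].
  apply: is_derive_eq (is_deriveM (du y) (is_deriveV (u0 x) (du x))) _.
  by rewrite /GRing.scale /=; field; rewrite !u0.
have dterm y : is_derive t 1 (fun s => w x y * (psi 1 - psi (u y s / u x s)))
    (w x y * - (derive1 psi (u y t / u x t) * (u y t / u x t) *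
      (derive1 (u y) t / u y t - derive1 (u x) t / u x t))).
  have dpsi : is_derive (u y t / u x t) 1 psi (derive1 psi (u y t / u x t)).
    case: psi_C1_concave => psi_der _ _.
    by rewrite derive1E; apply/derivableP/psi_der/divr_gt0.
  have -> : (fun s => w x y * (psi 1 - psi (u y s / u x s))) =
    w x y *: (cst (psi 1) - psi \o (fun s => u y s / u x s)) by [].
  apply: is_derive_eq (is_deriveZ (w x y) (is_deriveB (is_derive_cst (psi 1) t 1)
    (@is_derive1_comp _ psi (fun s => u y s / u x s) t _ _ dpsi (dq y)))) _.
  by rewrite /GRing.scale /= sub0r mulrA.
rewrite /psi_defect /psi_defect_deriv.
have -> : (fun s => (mu x)^-1 * \sum_(y | adj x y) w x y * (psi 1 - psi (u y s / u x s))) =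
  (mu x)^-1 *: (fun s => \sum_(y | adj x y) w x y * (psi 1 - psi (u y s / u x s))) by [].
exact/is_deriveZ/is_derive_sumr.
Qed.

Lemma psi_defect_deriv_le_at_max n K k sigma f g x :
  CDpsi adj w mu psi n (- K) -> (forall z, 0 < f z) ->
  (forall z, g z = Lap adj w mu f z + k * f z `^ sigma) ->
  (0 <= k /\ sigma <= 1) \/ (k <= 0 /\ 1 <= sigma) ->
  (forall y, adj x y -> psi_defect f y <= psi_defect f x) ->
  psi_defect_deriv f g x <= - (2 / n) * psi_defect f x ^+ 2 + 2 * K * psi_defect f x.
Proof.
move=> CD f_gt0 hg hk hmax; have f0 z : f z != 0 by rewrite gt_eqF.
have := psi_defect_deriv_flow x f0 hg.
set reaction := (mu x)^-1 * _.
have reaction_ge0 : 0 <= reaction.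
  rewrite mulr_ge0 ?invr_ge0 ?(ltW (mu_gt0 x)) ?sumr_ge0 // => y /w_gt0 wxy.
  by rewrite mulr_ge0 ?(ltW wxy) ?reaction_term_ge0.
have transport_le0 : (mu x)^-1 * \sum_(y | adj x y)
    w x y * (f y / f x * (psi_defect f y - psi_defect f x)) <= 0.
  rewrite pmulr_rle0 ?invr_gt0 // sumr_le0 // => y axy.
  rewrite pmulr_rle0 ?w_gt0 // pmulr_rle0 ?divr_gt0 // subr_le0.
  exact: hmax.
have := CD f f_gt0 x.
rewrite Gamma2Psi_defect // LapPsi_defect // GammaPsi_defect // sqrrN.
lra.
Qed.
End PsiDefect.

Lemma EVT_max_family (R : realType) (I : finType) (F : I -> R -> R) (a b : R) (i0 : I) :
  a <= b -> (forall i, {within `[a, b], continuous (F i)}%classic) ->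
  exists i, exists2 t, t \in `[a, b] & forall j s, s \in `[a, b] -> F j s <= F i t.
Proof.
move=> ab cF.
have /choice [tmax htmax] : forall i, exists t,
    t \in `[a, b] /\ forall s, s \in `[a, b] -> F i s <= F i t.
  by move=> i; have [t ? ?] := EVT_max ab (cF i); exists t.
case: (@arg_maxP _ _ I i0 xpredT (fun i => F i (tmax i)) isT) => i _ imax.
exists i, (tmax i) => [|j s hs]; first exact: (htmax i).1.
exact: le_trans ((htmax j).2 s hs) (imax j isT).
Qed.

Section LiYauEstimate.
Variables (R : realType) (V : finType) (adj : rel V) (w : V -> V -> R) (mu : V -> R).
Variables (psi : R -> R) (n K sigma : R) (c : R -> R) (u : V -> R -> R).
Hypothesis w_gt0 : forall x y, adj x y -> 0 < w x y.
Hypothesis mu_gt0 : forall x, 0 < mu x.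
Hypothesis psi_C1_concave : C1_concave_pos psi.
Hypothesis psi'1 : derive1 psi 1 = 0.
Hypotheses (n_gt0 : 0 < n) (K_gt0 : 0 < K).
Hypothesis CD : CDpsi adj w mu psi n (- K).
Hypothesis c_sign : forall t, 0 < t ->
  (0 <= c t /\ sigma <= 1) \/ (c t <= 0 /\ 1 <= sigma).
Hypothesis u_gt0 : forall t, 0 < t -> forall x, 0 < u x t.
Hypothesis u_derivable : forall t, 0 < t -> forall x, derivable (u x) t 1.
Hypothesis u_heat : forall t, 0 < t -> forall x,
  derive1 (u x) t = Lap adj w mu (fun y => u y t) x + c t * u x t `^ sigma.

Let defect x t := psi_defect adj w mu psi (fun y => u y t) x.
Let weighted_defect eps x t := (t - eps) * defect x t.

Lemma is_derive_weighted_defect (eps : R) x (t : R) : 0 < t ->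
  is_derive t 1 (weighted_defect eps x) (defect x t + (t - eps) *
    psi_defect_deriv adj w mu psi (fun y => u y t) (fun y => derive1 (u y) t) x).
Proof.
move=> t_gt0.
have dt : is_derive t 1 (fun s : R => s - eps) 1.
  by apply: is_derive_eq (is_deriveB (is_derive_id t 1) (is_derive_cst eps t 1)) _; rewrite subr0.
have dH := is_derive_psi_defect adj w mu psi_C1_concave x
  (u_gt0 t_gt0) (u_derivable t_gt0).
apply: is_derive_eq (is_deriveM dt dH) _.
by rewrite /GRing.scale /= mulr1 addrC.
Qed.

Lemma weighted_defect_max_le (eps T : R) x0 t0 : 0 < eps -> t0 \in `[eps, T] ->
  (forall y s, s \in `[eps, T] -> weighted_defect eps y s <= weighted_defect eps x0 t0) ->
  weighted_defect eps x0 t0 <= n / 2 + n * K * T.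
Proof.
move=> eps_gt0 t0I wmax; move: (t0I); rewrite in_itv /= => /andP[t0lo t0hi].
have T_gt0 : 0 < T by lra.
have bound_gt0 : 0 < n / 2 + n * K * T by rewrite addr_gt0 ?divr_gt0 ?mulr_gt0.
rewrite /weighted_defect; set P := t0 - eps; set Hx := defect x0 t0.
have [/le_trans -> //|PH_gt0] := lerP (P * Hx) 0; first exact: ltW.
have P_gt0 : 0 < P.
  rewrite lt_neqAle subr_ge0 t0lo andbT; apply: contraTneq PH_gt0 => <-.
  by rewrite mul0r ltxx.
have Hx_gt0 : 0 < Hx by move: PH_gt0; rewrite pmulr_rgt0.
have t0_gt0 : 0 < t0 by lra.
have [dE dEval] := is_derive_weighted_defect eps x0 t0_gt0.
have time_max : 0 <= derive1 (weighted_defect eps x0) t0.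
  apply: (derive1_ge_at_left dE P_gt0) => h /andP[hlo hhi].
  rewrite nmulr_rge0 ?invr_lt0 // subr_le0; apply: wmax.
  by rewrite in_itv /= -[P]/(t0 - eps) in hlo *; apply/andP; split; lra.
have space_max y : adj x0 y -> defect y t0 <= Hx.
  by move=> _; have := wmax y t0 t0I; rewrite /weighted_defect ler_pM2l.
set D := psi_defect_deriv _ _ _ _ _ _ _ in dEval.
have D_le : D <= - (2 / n) * Hx ^+ 2 + 2 * K * Hx :=
  psi_defect_deriv_le_at_max w_gt0 mu_gt0 psi_C1_concave psi'1 CD
    (u_gt0 t0_gt0) (u_heat t0_gt0) (c_sign t0_gt0) space_max.
rewrite derive1E dEval -/Hx -/P in time_max.
have : 0 <= Hx * (1 - (2 / n) * (P * Hx) + 2 * K * P).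
  by have := ler_wpM2l (ltW P_gt0) D_le; lra.
rewrite pmulr_rge0 // => time_max'.
have KP_le : K * P <= K * T by rewrite ler_pM2l // /P; lra.
have -> : n / 2 + n * K * T = (2 / n)^-1 * (1 + 2 * K * T) by field; rewrite gt_eqF.
by rewrite ler_pdivlMl ?divr_gt0 //; lra.
Qed.

Lemma scaled_defect_le x (T alpha : R) : 0 < T -> 0 < alpha < 1 ->
  (T - alpha ^+ 2 * T) * psi_defect adj w mu psi (fun y => u y T) x <= n / 2 + n * K * T.
Proof.
move=> T_gt0 /andP[a_gt0 a_lt1]; set eps := alpha ^+ 2 * T.
have eps_gt0 : 0 < eps by rewrite mulr_gt0 ?exprn_gt0.
have eps_le_T : eps <= T by rewrite /eps ler_piMl ?ltW //; nra.
have cont y : {within `[eps, T], continuous (weighted_defect eps y)}%classic.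
  apply: derivable_within_continuous => s; rewrite in_itv /= => /andP[s_ge _].
  by case: (is_derive_weighted_defect eps y (lt_le_trans eps_gt0 s_ge)).
have [x0 [t0 t0I wmax]] := EVT_max_family x eps_le_T cont.
apply: le_trans (weighted_defect_max_le eps_gt0 t0I wmax).
by apply: wmax; rewrite in_itv /= eps_le_T lexx.
Qed.
End LiYauEstimate.

Lemma LiYau_bound_of_weighted (R : realFieldType) (alpha n K T G : R) :
  0 < alpha < 1 -> 0 < n -> 0 < K -> 0 < T ->
  (T - alpha ^+ 2 * T) * G <= n / 2 + n * K * T ->
  (1 - alpha) * G <= n / (2 * (1 - alpha) * T) + K * n / (2 * alpha).
Proof.
move=> /andP[a_gt0 a_lt1] n_gt0 K_gt0 T_gt0 hG.
have sc_gt0 : 0 < T * (1 + alpha) by rewrite mulr_gt0 //; lra.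
rewrite -(ler_pM2l sc_gt0).
have -> : T * (1 + alpha) * ((1 - alpha) * G) = (T - alpha ^+ 2 * T) * G by ring.
apply: le_trans hG _.
have -> : T * (1 + alpha) * (n / (2 * (1 - alpha) * T) + K * n / (2 * alpha)) =
    n / 2 * ((1 + alpha) / (1 - alpha)) + n * K * T * ((1 + alpha) / (2 * alpha)).
  by field; rewrite !gt_eqF //; lra.
have ge1 (x y : R) : 0 < y -> y <= x -> 1 <= x / y by move=> y0 yx; rewrite ler_pdivlMr // mul1r.
by rewrite lerD // ler_peMr ?ge1 ?mulr_ge0 ?divr_ge0 ?(ltW n_gt0) ?(ltW K_gt0) ?(ltW T_gt0) //; lra.
Qed.

Theorem mainTheorem12 (R : realType) (V : finType) (adj : rel V)
    (w : V -> V -> R) (mu : V -> R) (psi : R -> R) (n K : R)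
    (sigma : R) (c : R -> R) (u : V -> R -> R) (alpha : R) :
  weighted_graph adj w mu ->
  C1_concave_pos psi -> derive1 psi 1 = 0 ->
  0 < n -> 0 < K ->
  CDpsi adj w mu psi n (- K) ->
  {within `[0, +oo[, continuous c}%classic ->
  ((forall t, 0 <= t -> 0 <= c t) /\ sigma <= 1 \/
   (forall t, 0 <= t -> c t <= 0) /\ 1 <= sigma) ->
  (forall x t, 0 <= t -> 0 < u x t) ->
  (forall x, {within `[0, +oo[, continuous (u x)}%classic) ->
  (forall x t, 0 < t -> derivable (u x) t 1) ->
  (forall x, {in `]0, +oo[, continuous (derive1 (u x))}) ->
  (forall x t, 0 < t ->
     derive1 (u x) t = Lap adj w mu (fun y => u y t) x + c t * (u x t) `^ sigma) ->
  0 < alpha < 1 ->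
  forall x t, 0 < t ->
    (1 - alpha) * GammaPsi adj w mu psi (fun y => u y t) x
      <= n / (2 * (1 - alpha) * t) + K * n / (2 * alpha).
Proof.
move=> [_ _ _ w_gt0 mu_gt0] psi_C1 psi'1 n_gt0 K_gt0 CD _ c_case u_ge0 _ u_der _ u_eq
  alpha01 x T T_gt0.
have u_gt0 t : 0 < t -> forall y, 0 < u y t by move=> /ltW t_ge0 y; exact: u_ge0.
have u_derivable t : 0 < t -> forall y, derivable (u y) t 1 by move=> t_gt0 y; exact: u_der.
have u_heat t : 0 < t -> forall y,
    derive1 (u y) t = Lap adj w mu (fun z => u z t) y + c t * u y t `^ sigma.
  by move=> t_gt0 y; exact: u_eq.
have c_sign t : 0 < t -> (0 <= c t /\ sigma <= 1) \/ (c t <= 0 /\ 1 <= sigma).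
  by move/ltW => t_ge0; case: c_case => -[hc hs]; [left | right]; split; rewrite ?hc.
rewrite GammaPsi_defect ?gt_eqF ?u_gt0 //.
apply: LiYau_bound_of_weighted => //.
exact: (scaled_defect_le w_gt0 mu_gt0 psi_C1 psi'1 n_gt0 K_gt0 CD c_sign
  u_gt0 u_derivable u_heat x T_gt0 alpha01).
Qed.
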